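(* Let $\mathcal V$ be a complex topological vector space and $\mathcal D\subseteq\mathcal V_{\rm nc}$ a noncommutative set satisfying (P1) each $\mathcal D_n$ is open in $\mathcal V^{n\times n}$, (P2) $UaU^*\in\mathcal D_n$ for $a\in\mathcal D_n$ and unitary $U\in\mathbb C^{n\times n}$, and (P3) if $\begin{bmatrix}a&0\\0&c\end{bmatrix}\in\mathcal D_{n+m}$ then $a\in\mathcal D_n,c\in\mathcal D_m$. If $n\in\mathbb N$ and $A\subseteq\mathcal D_n$ is open in the topology generated by the pseudodistance $\tilde d_{\mathcal D}$, then $A$ is open in the product topology induced by $\mathcal V$ on $\mathcal V^{n\times n}$.
   Context: A noncommutative set is a family $\mathcal D=(\mathcal D_n)$, $\mathcal D_n\subseteq\mathcal V^{n\times n}$, closed under direct sums. For $a\in\mathcal D_n,c\in\mathcal D_m,b\in\mathcal V^{n\times m}$, $\delta_{\mathcal D}(a,c)(b)=\big[\sup\{t\in[0,+\infty]\colon\begin{bmatrix}a&sb\\0&c\end{bmatrix}\in\mathcal D_{n+m}\ \forall s\in[0,t]\}\big]^{-1}$ ($1/0=+\infty,1/\infty=0$), $\tilde\delta_{\mathcal D}(a,c)=\delta_{\mathcal D}(a,c)(a-c)$ for $a,c\in\mathcal D_n$, and $\tilde d_{\mathcal D}(a,c)=\inf\{\sum_{j=1}^N\tilde\delta_{\mathcal D}(a_{j-1},a_j)\colon N\in\mathbb N,\ a_0=a,a_N=c,\ a_j\in\mathcal D_n\}$. *)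

From HB Require Import structures.
From mathcomp Require Import all_boot all_order all_algebra.
From mathcomp Require Import all_classical all_reals all_analysis.
From mathcomp Require Export complex.
Set Implicit Arguments. Unset Strict Implicit. Unset Printing Implicit Defensive.
Import Order.TTheory GRing.Theory Num.Theory.
Local Open Scope classical_set_scope.
Local Open Scope ring_scope.

Section NC.
Variables (R : realType) (V : topologicalLmodType R[i]).

(* A family (D_n)_n, D_n a subset of V^{n x n}; only the levels n >= 1 matter. *)
Definition ncfamily := forall n : nat, set 'M[V]_n.

Definition nc_direct_sum_closed (D : ncfamily) : Prop :=
  forall (n m : nat) (a : 'M[V]_n) (c : 'M[V]_m), (0 < n)%N -> (0 < m)%N ->
    D n a -> D m c -> D (n + m)%N (block_mx a 0 0 c).

Definition smx_mul p q r (U : 'M[R[i]]_(p, q)) (a : 'M[V]_(q, r)) : 'M[V]_(p, r) :=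
  \matrix_(i0, j0) \sum_k (U i0 k *: a k j0).
Definition mx_smul p q r (a : 'M[V]_(p, q)) (U : 'M[R[i]]_(q, r)) : 'M[V]_(p, r) :=
  \matrix_(i0, j0) \sum_k (U k j0 *: a i0 k).

Definition adjmx p q (U : 'M[R[i]]_(p, q)) : 'M[R[i]]_(q, p) := (map_mx Num.conj U)^T.
Definition unitary_mx n (U : 'M[R[i]]_n) : Prop := U *m adjmx U = 1%:M.

Definition einv (x : \bar R) : \bar R :=
  match x with
  | EFin r => if r == 0 then +oo%E else (r^-1)%:E
  | +oo%E => 0%E
  | -oo%E => 0%E
  end.

Definition nc_delta (D : ncfamily) n m (a : 'M[V]_n) (c : 'M[V]_m)
    (b : 'M[V]_(n, m)) : \bar R :=
  einv (ereal_sup [set t : \bar R | (0 <= t)%E /\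
    forall s : R, 0 <= s -> (s%:E <= t)%E ->
      D (n + m)%N (block_mx a (map_mx (fun v : V => (s%:C)%C *: v) b) 0 c)]).

Definition nc_tdelta (D : ncfamily) n (a c : 'M[V]_n) : \bar R :=
  nc_delta D a c (a - c).

Definition nc_td (D : ncfamily) n (a c : 'M[V]_n) : \bar R :=
  ereal_inf [set x : \bar R | exists (N : nat) (f : nat -> 'M[V]_n),
    [/\ (0 < N)%N, f 0%N = a, f N = c,
        (forall j, (j <= N)%N -> D n (f j)) &
        x = (\sum_(0 <= j < N) nc_tdelta D (f j) (f j.+1))%E]].

(* A (a subset of D_n) is open for the topology generated by tilde d_D:
   every point of A has a tilde d_D-ball (within D_n) contained in A. *)
Definition nc_td_open (D : ncfamily) n (A : set 'M[V]_n) : Prop :=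
  forall a, A a -> exists2 e : R, 0 < e &
    forall x, D n x -> (nc_td D a x < e%:E)%E -> A x.

End NC.

From HB Require Import structures.
From mathcomp Require Import all_boot all_order all_algebra.
From mathcomp Require Import all_classical all_reals all_analysis.
From mathcomp Require Import complex.
From mathcomp Require Import lra.
Import Order.TTheory GRing.Theory Num.Theory.
Local Open Scope classical_set_scope.
Local Open Scope ring_scope.

(* The one-step chain a, x gives d~(a, x) <= delta~(a, x) <= 1/T as soon as
   [[a, s (a - x)], [0, x]] lies in D_2n for every s in [0, T].  As D_2n is an
   open set containing diag(a, a) and scalar multiplication is jointly
   continuous, this holds, uniformly in s in [0, T], for every x in some
   neighbourhood of a.  So every d~-ball around a contains a neighbourhood of
   a in V^{n x n}. *)

Section ScaleNbhs.
Context {R : realType} {V : topologicalLmodType R[i]}.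

Lemma nbhs0_scale_itv {T : R} {W : set V} : 0 <= T -> nbhs 0 W ->
  nbhs 0 [set u | forall s : R, 0 <= s -> s <= T -> W ((s%:C)%C *: u)].
Proof.
move=> T0 W0.
have := @scale_continuous R[i] V (0, 0) W; rewrite /= scale0r => /(_ W0).
move=> [[P Q] /= [P0 Q0] PQ].
have [d /= d0 dP] := (nbhs_ballP _ _).1 P0.
(* rescale u by c = (T + 1) / d, so that s / c stays in the d-ball for s <= T *)
pose c : R[i] := ((T + 1)%:C)%C / d.
have c0 : 0 < c by rewrite divr_gt0 // -[0]/((0:R)%:C)%C ltcR; lra.
have := @scale_continuous R[i] V (c, 0) Q; rewrite /= scaler0 => /(_ Q0).
move=> [[B1 B2] /= [B1c B2_0] B12].
apply: filterS B2_0 => u B2u s s0 sT.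
have -> : (s%:C)%C *: u = ((s%:C)%C / c) *: (c *: u).
  by rewrite scalerA mulfVK // gt_eqF.
apply: (PQ ((s%:C)%C / c, c *: u)); split => /=; last first.
  exact: (B12 (c, u)) (conj (nbhs_singleton B1c) B2u).
apply: dP; rewrite /ball /= sub0r normrN normrM normfV (gtr0_norm c0).
have s0' : (0 : R[i]) <= (s%:C)%C by rewrite -[0]/((0:R)%:C)%C lecR.
rewrite (ger0_norm s0') ltr_pdivrMr // /c mulrC divfK ?gt_eqF // ltcR; lra.
Qed.

Lemma nbhs_subl (x : V) {W : set V} : nbhs 0 W -> nbhs x [set v | W (x - v)].
Proof.
rewrite -(subrr x) => /(@sub_continuous V (x, x)) [[B1 B2] /= [B1x B2x] sB].
apply: filterS B2x => v B2v.
exact: (sB (x, v)) (conj (nbhs_singleton B1x) B2v).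
Qed.

Lemma nbhs_scale_itv_subl (T : R) (x : V) (W : set V) : 0 <= T -> nbhs 0 W ->
  nbhs x [set v | forall s : R, 0 <= s -> s <= T -> W ((s%:C)%C *: (x - v))].
Proof. by move=> T0 /(nbhs0_scale_itv T0) /(nbhs_subl x). Qed.

End ScaleNbhs.

Section NcDistance.
Context {R : realType} {V : topologicalLmodType R[i]} (D : ncfamily V).

Lemma nc_td_le_tdelta {n} {a c : 'M[V]_n} : D n a -> D n c ->
  (nc_td D a c <= nc_tdelta D a c)%E.
Proof.
move=> aD cD; apply: ereal_inf_lbound.
exists 1%N, (fun j => if j is 0%N then a else c); split => //; first by case.
by rewrite big_nat1.
Qed.

Lemma nc_delta_le_inv {n m} {a : 'M[V]_n} {c : 'M[V]_m} {b : 'M[V]_(n, m)}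
    {T : R} : 0 < T ->
  (forall s : R, 0 <= s -> s <= T ->
     D (n + m)%N (block_mx a (map_mx (fun v : V => (s%:C)%C *: v) b) 0 c)) ->
  (nc_delta D a c b <= T^-1%:E)%E.
Proof.
move=> T0 segD; rewrite /nc_delta; set S := [set t : \bar R | _].
have ST : S T%:E.
  by split=> [|s s0]; rewrite ?lee_fin ?(ltW T0) //; apply: segD.
have := ereal_sup_ubound ST; case: (ereal_sup S) => [r| |] //=.
- rewrite lee_fin => Tr; have r0 : 0 < r by apply: lt_le_trans Tr.
  by rewrite gt_eqF // lee_fin lef_pV2 // posrE.
- by move=> _; rewrite lee_fin invr_ge0 ltW.
Qed.

Lemma nbhs_block_segment {n} {a : 'M[V]_n} {T : R} :
  0 <= T -> nbhs (block_mx a 0 0 a) (D (n + n)) ->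
  nbhs a [set x | forall s : R, 0 <= s -> s <= T ->
    D (n + n)%N (block_mx a (map_mx (fun v : V => (s%:C)%C *: v) (a - x)) 0 x)].
Proof.
move=> T0 [P /= P0 PD].
exists (fun i j => [set v | P (rshift n i) (rshift n j) v /\
   forall s : R, 0 <= s -> s <= T ->
     P (lshift n i) (rshift n j) ((s%:C)%C *: (a i j - v))]).
  move=> i j /=; apply: filterI.
    by have := P0 (rshift n i) (rshift n j); rewrite block_mxEdr.
  apply: nbhs_scale_itv_subl => //.
  by have := P0 (lshift n i) (rshift n j); rewrite block_mxEur mxE.
move=> x /= Px s s0 sT; apply: PD => i j.
rewrite -(splitK i) -(splitK j).
case: (fintype.split i) => i'; case: (fintype.split j) => j' /=.
- by have := nbhs_singleton (P0 (lshift n i') (lshift n j')); rewrite !block_mxEul.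
- by rewrite block_mxEur !mxE; have [_] := Px i' j'; apply.
- by have := nbhs_singleton (P0 (rshift n i') (lshift n j')); rewrite !block_mxEdl.
- by rewrite block_mxEdr; have [] := Px i' j'.
Qed.

End NcDistance.

Theorem proposition3p10 (R : realType) (V : topologicalLmodType R[i])
  (D : ncfamily V)
  (Dsum : nc_direct_sum_closed D)
  (P1 : forall n : nat, (0 < n)%N -> open (D n))
  (P2 : forall (n : nat) (a : 'M[V]_n) (U : 'M[R[i]]_n), (0 < n)%N ->
          D n a -> unitary_mx U -> D n (mx_smul (smx_mul U a) (adjmx U)))
  (P3 : forall (n m : nat) (a : 'M[V]_n) (c : 'M[V]_m), (0 < n)%N -> (0 < m)%N ->
          D (n + m)%N (block_mx a 0 0 c) -> D n a /\ D m c)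
  (n : nat) (hn : (0 < n)%N) (A : set 'M[V]_n)
  (hAD : A `<=` D n) (hA : nc_td_open D A) :
  open A.
Proof.
rewrite openE => a Aa; have aD := hAD a Aa.
have [e e0 ballA] := hA a Aa.
have T0 : 0 < 2 / e by rewrite divr_gt0.
have nn_gt0 : (0 < n + n)%N by rewrite addn_gt0 hn.
have diagD : nbhs (block_mx a 0 0 a) (D (n + n)).
  exact: open_nbhs_nbhs (conj (P1 _ nn_gt0) (Dsum _ _ _ _ hn hn aD aD)).
have aDn : nbhs a (D n) by exact: open_nbhs_nbhs (conj (P1 _ hn) aD).
apply: filterS (filterI (nbhs_block_segment D (ltW T0) diagD) aDn) => x [segD xD].
apply: ballA xD (le_lt_trans (nc_td_le_tdelta D aD xD) _).
apply: le_lt_trans (nc_delta_le_inv D T0 segD) _.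
by rewrite lte_fin invf_div; lra.
Qed.
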